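(* Let $N=3$ and let $g,h,u_m,\alpha_1,\delta_h,\delta_q$ be real numbers. Let $\boldsymbol{A}_H\in\mathbb{R}^{6\times6}$ be the matrix $$\boldsymbol{A}_H=\begin{pmatrix}0&1&0&0&0&0\\ gh-u_m^2-\tfrac13\alpha_1^2&2u_m&\tfrac23\alpha_1&0&0&gh\\ -2u_m\alpha_1&2\alpha_1&u_m&\tfrac35\alpha_1&0&0\\ -\tfrac23\alpha_1^2&0&\tfrac13\alpha_1&u_m&\tfrac47\alpha_1&0\\ 0&0&0&\tfrac25\alpha_1&u_m&0\\ \delta_h&\delta_q&\delta_q&\delta_q&\delta_q&0\end{pmatrix}.$$ Then the eigenvalues of $\boldsymbol{A}_H$ are $\lambda_1,\lambda_2,\lambda_3$, the three roots of $$P_S(\lambda)=-\lambda\big((\lambda-u_m)^2-gh-\alpha_1^2\big)+gh(\delta_h+\lambda\delta_q+2\alpha_1\delta_q),$$ together with $\lambda_4=u_m$ and $\lambda_{5,6}=u_m\pm\sqrt{3/7}\,\alpha_1$.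
   Context: $\boldsymbol{A}_H$ is the system matrix of the third-order Hyperbolic Shallow Water Exner Moment model, with $h$ water height, $g$ gravity, $u_m$ mean velocity, $\alpha_1$ the first Legendre moment of the velocity profile, and $\delta_h=\partial_hQ_b$, $\delta_q=\partial_{hu_m}Q_b$ partial derivatives of the solid transport discharge; for the statement these are arbitrary real parameters. *)

From mathcomp Require Import all_boot all_order all_algebra.
Set Implicit Arguments. Unset Strict Implicit. Unset Printing Implicit Defensive.
Import Order.TTheory GRing.Theory Num.Theory.
Local Open Scope ring_scope.

Definition A_H (R : fieldType) (g h um a1 dh dq : R) : 'M[R]_6 :=
  \matrix_(i < 6, j < 6)
   nth 0 (nth [::]
    [:: [:: 0; 1; 0; 0; 0; 0];
        [:: g * h - um ^+ 2 - (1/3) * a1 ^+ 2; 2 * um; (2/3) * a1; 0; 0; g * h];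
        [:: - (2 * um * a1); 2 * a1; um; (3/5) * a1; 0; 0];
        [:: - ((2/3) * a1 ^+ 2); 0; (1/3) * a1; um; (4/7) * a1; 0];
        [:: 0; 0; 0; (2/5) * a1; um; 0];
        [:: dh; dq; dq; dq; dq; 0] ] i) j.

Definition P_S (R : fieldType) (g h um a1 dh dq : R) : {poly R} :=
  - ('X * (('X - um%:P) ^+ 2 - (g * h + a1 ^+ 2)%:P))
  + (g * h)%:P * (dh%:P + 'X * dq%:P + (2 * a1 * dq)%:P).

From mathcomp Require Import all_boot all_order all_algebra.
From mathcomp Require Import ring.
Import Order.TTheory GRing.Theory Num.Theory.
Local Open Scope ring_scope.

(* Both sides are polynomials over a field of characteristic zero, so it is
   enough to compare their values at every x. The value of the characteristic
   polynomial at x is det (x I - A_H), which a Laplace expansion along the first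
   rows computes as -P_S(x) (x - u_m) ((x - u_m)^2 - 3/7 a1^2); over a real
   closed field the last factor splits as (x - u_m - s a1)(x - u_m + s a1) with
   s = sqrt(3/7). *)

Section MatrixOfSeqs.
Variable R : comPzRingType.

(* Entries outside the lists default to 0, so that expansion by minors can be
   computed on the lists themselves. *)
Definition mx_of_seqs n (L : seq (seq R)) : 'M[R]_n :=
  \matrix_(i < n, j < n) nth 0 (nth [::] L i) j.

Definition omit_nth n j (r : seq R) : seq R := mkseq (fun k => nth 0 r (bump j k)) n.

Definition minor0_seqs n j (L : seq (seq R)) : seq (seq R) :=
  mkseq (fun i => omit_nth n j (nth [::] L i.+1)) n.

Lemma expand_det_mx_of_seqs n L :
  \det (mx_of_seqs n.+1 L) =
  \sum_(j < n.+1) nth 0 (nth [::] L 0) j * ((-1) ^+ j * \det (mx_of_seqs n (minor0_seqs n j L))).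
Proof.
rewrite (expand_det_row _ ord0); apply: eq_bigr => j _.
rewrite /cofactor mxE add0n; congr (_ * (_ * \det _)).
by apply/matrixP => i k; rewrite !mxE /minor0_seqs /omit_nth !nth_mkseq.
Qed.

End MatrixOfSeqs.

Arguments mx_of_seqs {R} n L.
Arguments minor0_seqs {R} n j L.
Arguments omit_nth {R} n j r.

Lemma horner_char_poly (R : comNzRingType) n (A : 'M[R]_n) x :
  (char_poly A).[x] = \det (x%:M - A).
Proof.
rewrite -[_.[x]]/(horner_eval x (char_poly A)) -det_map_mx.
congr (\det _); apply/matrixP => i j.
by rewrite !mxE raddfB raddfMn /= !horner_evalE hornerX hornerC.
Qed.

Lemma poly_ext_horner (R : numDomainType) (p q : {poly R}) :
  (forall x, p.[x] = q.[x]) -> p = q.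
Proof.
move=> eq_pq; apply/subr0_eq.
pose rs : seq R := [seq i%:R | i <- iota 0 (size (p - q))].
apply: (@roots_geq_poly_eq0 _ _ rs).
- by apply/allP => y _; apply/rootP; rewrite hornerD hornerN eq_pq subrr.
- by rewrite map_inj_uniq ?iota_uniq // => i j /eqP; rewrite eqr_nat => /eqP.
- by rewrite size_map size_iota.
Qed.

Lemma char_poly_A_H (R : numFieldType) (g h um a1 dh dq : R) :
  char_poly (A_H g h um a1 dh dq) =
    - P_S g h um a1 dh dq * ('X - um%:P) * (('X - um%:P) ^+ 2 - (3/7 * a1 ^+ 2)%:P).
Proof.
apply: poly_ext_horner => x; rewrite horner_char_poly.
have -> : x%:M - A_H g h um a1 dh dq = mx_of_seqs 6
    [:: [:: x; -1; 0; 0; 0; 0];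
        [:: - (g * h - um ^+ 2 - (1/3) * a1 ^+ 2); x - 2 * um; - ((2/3) * a1); 0; 0; - (g * h)];
        [:: 2 * um * a1; - (2 * a1); x - um; - ((3/5) * a1); 0; 0];
        [:: (2/3) * a1 ^+ 2; 0; - ((1/3) * a1); x - um; - ((4/7) * a1); 0];
        [:: 0; 0; 0; - ((2/5) * a1); x - um; 0];
        [:: - dh; - dq; - dq; - dq; - dq; x] ].
  apply/matrixP => i j; rewrite !mxE -val_eqE.
  by case: i => [[|[|[|[|[|[|i]]]]]] ?] //; case: j => [[|[|[|[|[|[|j]]]]]] ?] //=;
    rewrite ?mulr1n ?mulr0n ?subr0 ?sub0r ?opprK.
repeat rewrite expand_det_mx_of_seqs !big_ord_recl big_ord0 /= /bump /minor0_seqs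
  /omit_nth /mkseq /= ?mul0r ?add0r ?addr0.
rewrite det_mx00 /P_S !(hornerD, hornerN, hornerM, horner_exp, hornerXsubC, hornerX, hornerC).
by field.
Qed.

Theorem corollary1 (R : rcfType) (g h um a1 dh dq : R) :
  char_poly (A_H g h um a1 dh dq) =
    - P_S g h um a1 dh dq
    * ('X - um%:P)
    * ('X - (um + Num.sqrt (3/7) * a1)%:P)
    * ('X - (um - Num.sqrt (3/7) * a1)%:P).
Proof.
rewrite char_poly_A_H -[RHS]mulrA; congr (_ * _).
set s := Num.sqrt (3/7 : R).
have s2 : s ^+ 2 = 3/7 by rewrite sqr_sqrtr // divr_ge0 // ler0n.
by rewrite -s2 !(rmorphB, rmorphD, rmorphM, rmorphXn) /=; ring.
Qed.
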